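(* Let $(H_n)_{n\ge0}$ be the monic Hermite polynomials ($H_0=1$, $H_{-1}=0$, $H_n=xH_{n-1}-\tfrac{n-1}{2}H_{n-2}$), with coefficients $H_n(x)=\sum_{i=0}^n b_{n,i}x^i$ (convention $b_{m,m}=1$, $b_{m,l}=0$ for $l>m$). Let $(\gamma_m)_{m\ge1}$ be nonzero complex numbers with $\gamma_m\gamma_{m+1}=-\tfrac m2$ for all $m\ge1$. For integers $n\ge k\ge1$ and $0\le t\le k-1$ let $E_{k,n,t}$ be the determinant of the $(k-t-1)\times(k-t-1)$ matrix with $(\rho,c)$ entry $b_{n-k+t+1+c,\;n-k+t+\rho}$ ($E_{k,n,k-1}=1$), and define $$\Sigma_H(n,k)=\sum_{\substack{0\le j\le k-1\\ j \text{ even}}}\frac{(-1)^{j/2}}{2^j}\frac{(n-k+j)!}{(n-k)!\,(j/2)!}\sum_{r=1}^{k-j}\gamma_{n-k+j+1}\cdots\gamma_{n-k+j+r}\,E_{k,n,j+r-1}.$$ If $n$ is even, $k$ is odd and $n\ge k\ge3$, then $\Sigma_H(n,k)\neq0$.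
   Context: The hypothesis on $(\gamma_m)$ is the paper's standing assumption that $H_n^{(1)}=H_n+\gamma_nH_{n-1}$ is a Geronimus transformation of the Hermite polynomials normalized by $\gamma_2+\frac{1}{2\gamma_1}=0$, which yields $\gamma_m\gamma_{m+1}=-m/2$. *)

From HB Require Import structures.
From mathcomp Require Import all_boot all_order all_algebra.
From mathcomp Require Import reals complex.
Set Implicit Arguments. Unset Strict Implicit. Unset Printing Implicit Defensive.
Import Order.TTheory GRing.Theory Num.Theory.
Local Open Scope ring_scope.

Section Hermite.
Variable F : fieldType.

(* herm2 n = (H_{n-1}, H_n), with H_{-1} = 0, H_0 = 1 and
   H_{n+1} = x H_n - n/2 H_{n-1}   (i.e. H_n = x H_{n-1} - (n-1)/2 H_{n-2}). *)
Fixpoint herm2 (n : nat) : {poly F} * {poly F} :=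
  match n with
  | 0 => (0, 1)
  | n'.+1 => let: (a, b) := herm2 n' in (b, 'X * b - (n'%:R / 2) *: a)
  end.

Definition hermite (n : nat) : {poly F} := (herm2 n).2.

Definition hcoef (n i : nat) : F := (hermite n)`_i.

Definition Ekn (k n t : nat) : F :=
  \det (\matrix_(i < k - t - 1, j < k - t - 1)
          hcoef (n - k + t + 1 + j.+1) (n - k + t + i.+1)).

Definition SigmaH (g : nat -> F) (n k : nat) : F :=
  \sum_(0 <= j < k | ~~ odd j)
    ((-1) ^+ (j./2) / 2 ^+ j) *
    ((n - k + j)`!%:R / ((n - k)`!%:R * (j./2)`!%:R)) *
    \sum_(1 <= r < (k - j).+1)
       (\prod_(n - k + j + 1 <= i < n - k + j + r + 1) g i) * Ekn k n (j + r - 1).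

End Hermite.

From HB Require Import structures.
From mathcomp Require Import all_boot all_order all_algebra.
From mathcomp Require Import reals complex.
From mathcomp Require Import zify ring.
Set Implicit Arguments. Unset Strict Implicit. Unset Printing Implicit Defensive.
Import Order.TTheory GRing.Theory Num.Theory.
Local Open Scope ring_scope.

(* The determinants E_{k,n,t} are cofactors of the unitriangular
   matrix of Hermite coefficients b_{i,j}, hence (up to sign) entries of its
   inverse, i.e. coefficients of the Hermite expansion of the powers of x:
   x^(Q+2p) contains H_Q with weight (Q+2p)! / (Q! p! 4^p).  With these values
   the relation gamma_m gamma_(m+1) = -m/2 collapses each inner sum over r to
   gamma_(n-k+j+1) times such a weight, and gamma_(d+1+2J) / gamma_(d+1) is a
   ratio of rising factorials.  What is left is a terminating hypergeometric
   sum, evaluated by Chu-Vandermonde: for k = 2K+1 and d = n-k,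
     Sigma_H(n,k) = gamma_(d+1) (d+2K)! / (d! K! 4^K) * (-1/2)_K / ((d+1)/2)_K,
   which is nonzero. *)

Section HermiteRecurrence.
Variable F : fieldType.

Lemma hermite0 : hermite F 0 = 1. Proof. by []. Qed.

Lemma hermite1 : hermite F 1 = 'X.
Proof. by rewrite /hermite /= mulr1 mul0r scale0r subr0. Qed.

Lemma hermiteSS n :
  hermite F n.+2 = 'X * hermite F n.+1 - (n.+1%:R / 2) *: hermite F n.
Proof. by rewrite /hermite /=; case: (herm2 F n). Qed.

Lemma mulX_hermite n :
  'X * hermite F n = hermite F n.+1 + (n%:R / 2) *: hermite F n.-1.
Proof.
case: n => [|n]; first by rewrite hermite0 hermite1 mulr1 mul0r scale0r addr0.
by rewrite hermiteSS subrK.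
Qed.

Lemma size_lead_coef_hermite n :
  size (hermite F n) = n.+1 /\ lead_coef (hermite F n) = 1.
Proof.
elim/ltn_ind: n => -[|[|n]] IH.
- by rewrite hermite0 size_poly1 lead_coef1.
- by rewrite hermite1 size_polyX lead_coefX.
have [sz1 lc1] := IH n.+1 (ltnSn _); have [sz0 _] := IH n (ltnW (ltnSn _)).
have nz1 : hermite F n.+1 != 0 by rewrite -size_poly_gt0 sz1.
have ltsz : (size (- ((n.+1%:R / 2) *: hermite F n))%R < size (hermite F n.+1 * 'X)%R)%N.
  by rewrite size_polyN size_mulX // sz1 ltnS (leq_trans (size_scale_leq _ _)) // sz0.
rewrite hermiteSS mulrC size_polyDl // lead_coefDl // size_mulX // sz1.
by rewrite lead_coefMX lc1.
Qed.

Lemma hcoef_gt n i : (n < i)%N -> hcoef F n i = 0.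
Proof.
by move=> ltni; rewrite /hcoef nth_default // (size_lead_coef_hermite n).1.
Qed.

Lemma hcoef_diag n : hcoef F n n = 1.
Proof.
have [sz lc] := size_lead_coef_hermite n.
by rewrite /hcoef -lc lead_coefE sz.
Qed.

End HermiteRecurrence.

Section HermiteInverse.
Variable F : numFieldType.

Lemma natf_fact_neq0 m : (m`!%:R : F) != 0.
Proof. by rewrite pnatr_eq0 -lt0n fact_gt0. Qed.

Lemma expf4_neq0 m : (4 ^+ m : F) != 0.
Proof. by rewrite expf_neq0 // pnatr_eq0. Qed.

Ltac natf_neq0 := repeat (apply/andP; split);
  rewrite ?natf_fact_neq0 ?expf4_neq0 ?nat1r ?natr1 -?natrD ?pnatr_eq0 //.

(* [Xhcoef R Q] is the coefficient of H_Q in x^R (see [Xpow_hermite]); it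
   vanishes unless R = Q + 2p, where it is [hinv Q p]. *)
Definition hinv (Q p : nat) : F :=
  (Q + p.*2)`!%:R / (Q`!%:R * p`!%:R * 4 ^+ p).

Definition Xhcoef (R Q : nat) : F :=
  if (Q <= R)%N && ~~ odd (R - Q) then hinv Q ((R - Q)./2) else 0.

Lemma hinv0 Q : hinv Q 0 = 1.
Proof. by rewrite /hinv addn0 expr0 !mulr1 divff // natf_fact_neq0. Qed.

Lemma hinv0S p : hinv 0 p.+1 = 2^-1 * hinv 1 p.
Proof.
rewrite /hinv !add0n add1n doubleS !factS -mul2n !natrM exprS fact0.
by field; natf_neq0.
Qed.

Lemma hinvSS Q p :
  hinv Q.+1 p.+1 = hinv Q p.+1 + Q.+2%:R / 2 * hinv Q.+2 p.
Proof.
rewrite /hinv -!mul2n.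
have -> : (Q.+1 + 2 * p.+1 = (Q + 2 * p).+3)%N by lia.
have -> : (Q + 2 * p.+1 = (Q + 2 * p).+2)%N by lia.
have -> : (Q.+2 + 2 * p = (Q + 2 * p).+2)%N by lia.
by rewrite !factS !natrM exprS; field; natf_neq0.
Qed.

Lemma Xhcoef_double Q p : Xhcoef (Q + p.*2) Q = hinv Q p.
Proof. by rewrite /Xhcoef leq_addr addKn odd_double doubleK. Qed.

Lemma Xhcoef_diag Q : Xhcoef Q Q = 1.
Proof. by rewrite -{1}[Q]addn0 -double0 Xhcoef_double hinv0. Qed.

Lemma Xhcoef_eq0 R Q : (forall p, R <> Q + p.*2)%N -> Xhcoef R Q = 0.
Proof.
rewrite /Xhcoef; case: ifP => // /andP[leQR evenRQ] /(_ (R - Q)./2).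
by have := odd_double_half (R - Q); lia.
Qed.

Lemma Xhcoef_gt R Q : (R < Q)%N -> Xhcoef R Q = 0.
Proof. by rewrite /Xhcoef ltnNge => /negbTE ->. Qed.

Lemma Xhcoef_odd R Q : odd (R - Q) -> Xhcoef R Q = 0.
Proof. by rewrite /Xhcoef => ->; rewrite andbF. Qed.

Lemma Xhcoef_rec R Q :
  Xhcoef R.+1 Q
  = (if Q is Q'.+1 then Xhcoef R Q' else 0) + Q.+1%:R / 2 * Xhcoef R Q.+1.
Proof.
have [[p eR] | noR] : (exists p, R.+1 = Q + p.*2)%N \/ (forall p, R.+1 <> Q + p.*2)%N.
- case: (boolP ((Q <= R.+1)%N && ~~ odd (R.+1 - Q))) => [/andP[leQR evenRQ] | oddRQ].
    by left; exists (R.+1 - Q)./2; have := odd_double_half (R.+1 - Q); lia.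
  by right => p eR; move: oddRQ; rewrite eR; lia.
- rewrite eR; case: Q p eR => [|Q] [|p] eR //.
  + have -> : R = (1 + p.*2)%N by lia.
    by rewrite !Xhcoef_double hinv0S add0r mul1r.
  + have -> : R = Q by lia.
    by rewrite double0 addn0 !Xhcoef_diag (@Xhcoef_gt Q Q.+2) // mulr0 addr0.
  + have -> : R = (Q + p.+1.*2)%N by lia.
    rewrite !Xhcoef_double hinvSS.
    have -> : (Q + p.+1.*2 = Q.+2 + p.*2)%N by lia.
    by rewrite Xhcoef_double.
- rewrite Xhcoef_eq0 // (@Xhcoef_eq0 R Q.+1) ?mulr0 ?addr0; last first.
    by move=> p eR; apply: (noR p.+1); lia.
  by case: Q noR => // Q noR; rewrite Xhcoef_eq0 // => p eR; apply: (noR p); lia.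
Qed.

Lemma Xpow_hermite M R : (R < M)%N ->
  'X^R = \sum_(0 <= Q < M) Xhcoef R Q *: hermite F Q.
Proof.
case: M => [//|M]; elim: R => [_|R IH ltRM].
  rewrite big_nat_recl // big1_seq => [|Q /andP[_ _]]; last by rewrite Xhcoef_gt ?scale0r.
  by rewrite Xhcoef_diag hermite0 scale1r expr0 addr0.
rewrite exprS IH ?(ltnW ltRM) // mulr_sumr.
under eq_bigr do rewrite -scalerAr mulX_hermite scalerDr scalerA.
under [in RHS]eq_bigr do rewrite Xhcoef_rec scalerDl.
rewrite !big_split /=; congr (_ + _).
  rewrite [in RHS]big_nat_recl // scale0r add0r big_nat_recr //=.
  by rewrite (@Xhcoef_gt R M ltRM) scale0r addr0.
rewrite big_nat_recl // mul0r mulr0 scale0r add0r big_nat_recr //=.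
rewrite (@Xhcoef_gt R M.+1 (ltnW ltRM)) mulr0 scale0r addr0.
by apply: eq_bigr => Q _; rewrite mulrC.
Qed.

Lemma hcoef_Xhcoef_sum a m p r : (p <= m)%N -> (r <= m)%N ->
  \sum_(q < m.+1) hcoef F (a + q) (a + p) * Xhcoef (a + r) (a + q) = (p == r)%:R.
Proof.
move=> lepm lerm.
have := @Xpow_hermite (a + m.+1) (a + r); rewrite ltn_add2l ltnS => /(_ lerm).
move=> /(congr1 (fun P : {poly F} => P`_(a + p))).
rewrite coefXn eqn_add2l coef_sum => ->.
rewrite (big_cat_nat _ (leq_addr m.+1 a)) //= [in RHS]big1_seq ?add0r => [|Q]; last first.
  rewrite mem_index_iota coefZ => /andP[_ ltQa].
  by rewrite [_`_ _]hcoef_gt ?mulr0 ?ltn_addr.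
rewrite [RHS](big_addn 0 _ a) addKn big_mkord; apply: eq_bigr => q _.
by rewrite coefZ mulrC [(q + a)%N]addnC.
Qed.

Definition hcoef_mx a m : 'M[F]_m.+1 := \matrix_(p, q) hcoef F (a + q) (a + p).
Definition Xhcoef_mx a m : 'M[F]_m.+1 := \matrix_(q, r) Xhcoef (a + r) (a + q).

Lemma hcoef_mxK a m : hcoef_mx a m *m Xhcoef_mx a m = 1%:M.
Proof.
apply/matrixP => p r; rewrite !mxE.
rewrite -(hcoef_Xhcoef_sum a (ltnSE (ltn_ord p)) (ltnSE (ltn_ord r))).
by apply: eq_bigr => q _; rewrite !mxE.
Qed.

Lemma det_hcoef_mx a m : \det (hcoef_mx a m) = 1.
Proof.
rewrite -det_tr det_trig; first by apply: big1 => i _; rewrite !mxE hcoef_diag.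
by apply/is_trig_mxP => i j ltij; rewrite !mxE hcoef_gt // ltn_add2l.
Qed.

Lemma adj_hcoef_mx a m : \adj (hcoef_mx a m) = Xhcoef_mx a m.
Proof.
by rewrite -[LHS]mulmx1 -(hcoef_mxK a m) mulmxA mul_adj_mx det_hcoef_mx mul1mx.
Qed.

Lemma det_hcoef_minor a m :
  \det (\matrix_(i < m, j < m) hcoef F (a + j.+1) (a + i))
  = (-1) ^+ m * Xhcoef (a + m) a.
Proof.
have /(congr1 (fun A : 'M_m.+1 => A ord0 ord_max)) := adj_hcoef_mx a m.
rewrite !mxE addn0 /cofactor /= addn0 => <-.
rewrite signrMK; congr (\det _); apply/matrixP => i j.
by rewrite !mxE lift_max lift0.
Qed.

Lemma hinv_neq0 Q p : hinv Q p != 0.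
Proof.
rewrite /hinv mulf_neq0 ?invr_neq0 ?natf_fact_neq0 //.
by rewrite !mulf_neq0 ?natf_fact_neq0 ?expf4_neq0.
Qed.

Lemma Ekn_Xhcoef k n t : (t < k)%N -> (k <= n)%N ->
  Ekn F k n t = (-1) ^+ (k - t - 1) * Xhcoef n (n - k + t + 1).
Proof.
move=> ltkt lekn; rewrite /Ekn.
rewrite -[n in Xhcoef n _](_ : n - k + t + 1 + (k - t - 1) = n)%N; last lia.
rewrite -det_hcoef_minor; congr (\det _); apply/matrixP => i j; rewrite !mxE.
by congr (hcoef _ _ _); lia.
Qed.

Lemma hinv_binomial d J L :
  (-1) ^+ J / 2 ^+ J.*2 * ((d + J.*2)`!%:R / (d`!%:R * J`!%:R)) * hinv (d + J.*2) L
  = (-1) ^+ J * 'C(J + L, J)%:R * hinv d (J + L).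
Proof.
have -> : ('C(J + L, J)%:R : F) = (J + L)`!%:R / (J`!%:R * L`!%:R).
  by rewrite -(bin_fact (leq_addr L J)) addKn !natrM mulfK // mulf_neq0 ?natf_fact_neq0.
rewrite /hinv -addnA -doubleD -mul2n exprM (_ : 2 ^+ 2 = 4 :> F) ?exprD.
  by field; natf_neq0.
by rewrite expr2 -natrM.
Qed.

End HermiteInverse.

Lemma big_nat_even (V : nmodType) K (f : nat -> V) :
  \sum_(0 <= j < K.*2.+1 | ~~ odd j) f j = \sum_(0 <= J < K.+1) f J.*2.
Proof.
rewrite big_mkcond; elim: K => [|K IH]; first by rewrite !big_nat1.
rewrite doubleS big_nat_recr //= big_nat_recr //= IH [in RHS]big_nat_recr //=.
by rewrite odd_double /= addr0.
Qed.

Section RisingFactorial.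
Variable F : fieldType.

Definition rising (x : F) K := \prod_(i < K) (x + i%:R).

Lemma rising0 x : rising x 0 = 1.
Proof. exact: big_ord0. Qed.

Lemma risingS x K : rising x K.+1 = x * rising (x + 1) K.
Proof.
rewrite /rising big_ord_recl addr0; congr (_ * _).
by apply: eq_bigr => i _; rewrite lift0 -nat1r addrA.
Qed.

Lemma risingSr x K : rising x K.+1 = rising x K * (x + K%:R).
Proof. by rewrite /rising big_ord_recr. Qed.

Lemma rising_neq0 x K :
  (forall i, (i < K)%N -> x + i%:R != 0) -> rising x K != 0.
Proof. by move=> nz; rewrite prodf_seq_neq0; apply/allP => i _; apply: nz. Qed.

Lemma chu_vandermonde b c K : (forall i, (i < K)%N -> c + i%:R != 0) ->
  \sum_(0 <= J < K.+1) (-1) ^+ J * 'C(K, J)%:R * (rising b J / rising c J)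
  = rising (c - b) K / rising c K.
Proof.
elim: K b c => [|K IH] b c nz.
  by rewrite big_nat1 !rising0 expr0 !mul1r.
have nz_c : c != 0 by have := nz 0%N isT; rewrite addr0.
have nz_rc : rising c K != 0 by apply: rising_neq0 => i ltiK; apply: nz; apply: ltnW.
have rising_c1 : rising (c + 1) K = rising c K * (c + K%:R) / c.
  by rewrite -risingSr risingS mulrAC divff ?mul1r.
have lower : \sum_(0 <= i < K.+1)
      (-1) ^+ i.+1 * 'C(K, i)%:R * (rising b i.+1 / rising c i.+1)
    = - (b / c) * (rising (c - b) K / rising (c + 1) K).
  rewrite -(addrKA 1 c b) (addrC 1 b) -IH => [|i ltiK]; last first.
    by rewrite -addrA nat1r; apply: nz.
  rewrite mulr_sumr; apply: eq_big_nat => i /andP[_ ltiK].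
  rewrite !risingS exprS; field.
  rewrite nz_c andbT; apply: rising_neq0 => j ltji; rewrite -addrA nat1r.
  by apply: nz; rewrite ltnS (leq_trans ltji) // -ltnS.
have upper : \sum_(0 <= i < K.+1)
      (-1) ^+ i.+1 * 'C(K, i.+1)%:R * (rising b i.+1 / rising c i.+1)
    = rising (c - b) K / rising c K - 1.
  rewrite -IH => [|i ltiK]; last by apply/nz/ltnW.
  rewrite big_nat_recr //= bin_small // mulr0 mul0r addr0 big_nat_recl //.
  by rewrite expr0 bin0 !rising0 divr1 !mul1r addrC addKr.
rewrite big_nat_recl // expr0 bin0 !rising0 divr1 !mul1r.
under eq_big_nat => i _ do rewrite binS natrD mulrDr mulrDl.
rewrite big_split /= lower upper rising_c1 !risingSr.
by field; rewrite nz_rc nz_c andbT nz.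
Qed.

End RisingFactorial.

Lemma half_addn_neq0 (F : numFieldType) m i : m.+1%:R / 2 + i%:R != 0 :> F.
Proof.
have -> : m.+1%:R / 2 + i%:R = (m.+1 + i.*2)%:R / 2 :> F.
  by rewrite natrD -muln2 natrM; field.
by rewrite mulf_neq0 ?invr_neq0 ?pnatr_eq0.
Qed.

Lemma rising_half_neq0 (F : numFieldType) m J : rising (m.+1%:R / 2 : F) J != 0.
Proof. by apply: rising_neq0 => i _; apply: half_addn_neq0. Qed.

Lemma rising_neg_half_neq0 (F : numFieldType) K : rising (- 2^-1 : F) K != 0.
Proof.
apply: rising_neq0 => i _.
have -> : - 2^-1 + i%:R = ((i.*2)%:R - 1) / 2 :> F by rewrite -muln2 natrM; field.
rewrite mulf_neq0 ?invr_neq0 ?pnatr_eq0 // subr_eq0 -[1]/(1%:R) eqr_nat.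
by apply/eqP => /(congr1 odd); rewrite odd_double.
Qed.

Section GammaSequence.
Variables (F : numFieldType) (g : nat -> F).
Hypothesis g_mul_next : forall m, (1 <= m)%N -> g m * g m.+1 = - (m%:R / 2).

(* The inner sum of [SigmaH] for n - k + j = a and k - j = 2L + 1, with each
   E_{k,n,t} rewritten by [Ekn_Xhcoef]. *)
Definition inner_sum a L : F :=
  \sum_(1 <= r < L.*2.+2) (\prod_(a + 1 <= i < a + r + 1) g i) *
    ((-1) ^+ (L.*2.+1 - r) * Xhcoef F (a + L.*2.+1) (a + r)).

(* Peeling off r = 1, 2 leaves g_(a+1) g_(a+2) times the same sum at a + 2;
   the term r = 2 vanishes by parity. *)
Lemma inner_sum_eq a L : inner_sum a L = g a.+1 * hinv F a L.
Proof.
elim: L a => [|L IH] a.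
  rewrite /inner_sum big_nat1 double0 subnn expr0 mul1r !addn1 big_nat1.
  by rewrite Xhcoef_diag hinv0 !mulr1.
have prod_split r : \prod_(a + 1 <= i < a + r.+2 + 1) g i =
    g a.+1 * g a.+2 * \prod_(a.+2 + 1 <= i < a.+2 + r + 1) g i.
  rewrite big_ltn; last lia.
  rewrite big_ltn; last lia.
  by rewrite mulrA !addn1 !addnS !addSn.
have rest : \sum_(1 <= r < L.*2.+2) (\prod_(a + 1 <= i < a + r.+2 + 1) g i) *
      ((-1) ^+ (L.*2.+3 - r.+2) * Xhcoef F (a + L.*2.+3) (a + r.+2))
    = g a.+1 * g a.+2 * inner_sum a.+2 L.
  rewrite /inner_sum mulr_sumr; apply: eq_big_nat => r _.
  by rewrite prod_split -!mulrA !addSnnS !addnS.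
rewrite /inner_sum doubleS big_nat_recl // big_nat_recl // rest IH.
rewrite (@Xhcoef_odd _ (a + L.*2.+3) (a + 2)) ?mulr0 ?add0r; last first.
  by rewrite subnDl !subSS subn0 /= odd_double.
have -> : (a + L.*2.+3 = a.+1 + L.+1.*2)%N by rewrite doubleS addSnnS !addnS.
have -> : (L.*2.+3 - 1 = L.+1.*2)%N by rewrite doubleS.
rewrite !addn1 big_nat1 Xhcoef_double.
rewrite -signr_odd odd_double expr0 mul1r.
rewrite -mulrA [g a.+2 * _]mulrA g_mul_next // hinvSS.
by ring.
Qed.

Lemma g_shift2 m : (1 <= m)%N -> g m.+2 * m%:R = g m * m.+1%:R.
Proof.
move=> m_gt0.
have -> : m%:R = - 2 * (g m * g m.+1) :> F by rewrite g_mul_next //; field.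
have -> : m.+1%:R = - 2 * (g m.+1 * g m.+2) :> F by rewrite g_mul_next //; field.
by ring.
Qed.

Lemma g_rising d J :
  g (d + J.*2).+1 = g d.+1 * (rising (d.+2%:R / 2) J / rising (d.+1%:R / 2) J).
Proof.
elim: J => [|J IH]; first by rewrite double0 addn0 !rising0 divr1 mulr1.
rewrite doubleS !addnS !risingSr; set m := (d + J.*2).+1.
have m_neq0 : m%:R != 0 :> F by rewrite pnatr_eq0.
have -> : g m.+2 = g m * m.+1%:R / m%:R by rewrite -g_shift2 // mulfK.
have -> : d.+2%:R / 2 + J%:R = m.+1%:R / 2 :> F.
  by rewrite /m -!addSn natrD -muln2 natrM; field.
have -> : d.+1%:R / 2 + J%:R = m%:R / 2 :> F.
  by rewrite /m -addSn natrD -muln2 natrM; field.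
rewrite IH; field.
by rewrite m_neq0 !rising_half_neq0.
Qed.

Lemma SigmaH_closed_form d K :
  SigmaH g (d + K.*2.+1) K.*2.+1
  = g d.+1 * hinv F d K * (rising (- 2^-1) K / rising (d.+1%:R / 2) K).
Proof.
rewrite /SigmaH addnK big_nat_even.
have inner J : (J <= K)%N ->
    \sum_(1 <= r < (K.*2.+1 - J.*2).+1)
      (\prod_(d + J.*2 + 1 <= i < d + J.*2 + r + 1) g i) *
      Ekn F K.*2.+1 (d + K.*2.+1) (J.*2 + r - 1)
    = inner_sum (d + J.*2) (K - J).
  move=> leJK; rewrite /inner_sum (_ : (K.*2.+1 - J.*2).+1 = (K - J).*2.+2)%N; last lia.
  apply: eq_big_nat => r /andP[r_gt0 ltr]; rewrite Ekn_Xhcoef; try lia.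
  by congr (_ * ((-1) ^+ _ * Xhcoef _ _ _)); lia.
have term J : (J <= K)%N ->
    (-1) ^+ (J.*2)./2 / 2 ^+ J.*2 *
    ((d + J.*2)`!%:R / (d`!%:R * (J.*2)./2`!%:R)) *
    \sum_(1 <= r < (K.*2.+1 - J.*2).+1)
      (\prod_(d + J.*2 + 1 <= i < d + J.*2 + r + 1) g i) *
      Ekn F K.*2.+1 (d + K.*2.+1) (J.*2 + r - 1)
    = g d.+1 * hinv F d K *
      ((-1) ^+ J * 'C(K, J)%:R *
       (rising (d.+2%:R / 2) J / rising (d.+1%:R / 2) J)).
  move=> leJK; rewrite inner // inner_sum_eq g_rising doubleK.
  by rewrite [LHS]mulrCA hinv_binomial subnKC //; ring.
under eq_big_nat => J /andP[_ ltJK] do rewrite term //.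
rewrite -mulr_sumr chu_vandermonde => [|i _]; last exact: half_addn_neq0.
by rewrite (_ : _ - _ = - 2^-1) // -addn1 natrD; field.
Qed.

End GammaSequence.

Theorem theorem5 (R : realType) (g : nat -> R[i]) (n k : nat) :
  (forall m : nat, (1 <= m)%N -> g m != 0) ->
  (forall m : nat, (1 <= m)%N -> g m * g m.+1 = - (m%:R / 2)) ->
  ~~ odd n -> odd k -> (3 <= k)%N -> (k <= n)%N ->
  SigmaH g n k != 0.
Proof.
move=> g_neq0 g_mul_next _ odd_k _ le_kn.
have [K def_k] : exists K, k = K.*2.+1.
  by exists k./2; rewrite -[k in LHS]odd_double_half odd_k.
rewrite -(subnK le_kn) def_k (SigmaH_closed_form g_mul_next).
apply: mulf_neq0; first apply: mulf_neq0.
- exact: g_neq0.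
- exact: hinv_neq0.
- by rewrite mulf_neq0 ?invr_neq0 ?rising_neg_half_neq0 ?rising_half_neq0.
Qed.
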